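(* Let $X$ be a real normed linear space with zero $\theta$, such that $\dim X>1$ and the norm is strictly convex. Let $m\in\mathbb{N}$ with $\dim X\geqslant m$ (i.e. $X$ contains $m$ linearly independent elements). Let $E$ satisfy $B(\theta,1)\subseteq E\subseteq\overline{B}(\theta,1)$ and $E=\bigcup_{i=1}^m A_i$, where $A_i\cong A_j$ for all $i,j$. Then either $\theta\in\bigcap_{i=1}^m\mathrm{Int}\,A_i$, or $\theta\notin\bigcup_{i=1}^m\mathrm{Int}\,A_i$.
   Context: $B(\theta,1)=\{x:\|x\|<1\}$, $\overline{B}(\theta,1)=\{x:\|x\|\leqslant1\}$. The norm is strictly convex if for all $x\ne y$ with $\|x\|=\|y\|=1$ and $\lambda\in(0,1)$, $\|\lambda x+(1-\lambda)y\|<1$. Sets $A,B\subseteq X$ are congruent, $A\cong B$, if there is a surjective map $f\colon X\to X$ with $\|f(x)-f(y)\|=\|x-y\|$ for all $x,y$ and $f(A)=B$. $\mathrm{Int}\,A$ is the set of $x\in A$ such that some open ball $B(x,\varepsilon)\subseteq A$. Completeness of $X$ is not assumed. *)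

From HB Require Import structures.
From mathcomp Require Import all_boot all_order all_algebra.
From mathcomp Require Import all_classical all_reals all_analysis.
Set Implicit Arguments. Unset Strict Implicit. Unset Printing Implicit Defensive.
Import Order.TTheory GRing.Theory Num.Theory.
Import numFieldNormedType.Exports.
Local Open Scope classical_set_scope.
Local Open Scope ring_scope.

Section Defs.
Context {R : realType} {X : normedModType R}.

Definition oball (x : X) (r : R) : set X := [set y | `|y - x| < r].
Definition cball (x : X) (r : R) : set X := [set y | `|y - x| <= r].

Definition strictly_convex : Prop :=
  forall x y : X, x != y -> `|x| = 1 -> `|y| = 1 ->
  forall l : R, 0 < l < 1 -> `|l *: x + (1 - l) *: y| < 1.

Definition lin_indep (m : nat) (v : 'I_m -> X) : Prop :=
  forall c : 'I_m -> R, \sum_(i < m) c i *: v i = 0 -> forall i, c i = 0.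

Definition dim_ge (m : nat) : Prop := exists v : 'I_m -> X, lin_indep v.

Definition isometry_onto (f : X -> X) : Prop :=
  (forall y, exists x, f x = y) /\ (forall x y, `|f x - f y| = `|x - y|).

Definition congruent (A B : set X) : Prop :=
  exists f : X -> X, isometry_onto f /\ f @` A = B.

Definition Int (A : set X) : set X :=
  [set x | A x /\ exists e : R, 0 < e /\ oball x e `<=` A].
End Defs.

From HB Require Import structures.
From mathcomp Require Import all_boot all_order all_algebra.
From mathcomp Require Import all_classical all_reals all_analysis.
From mathcomp Require Import lra.
Set Implicit Arguments. Unset Strict Implicit. Unset Printing Implicit Defensive.
Import Order.TTheory GRing.Theory Num.Theory.
Import numFieldNormedType.Exports.
Local Open Scope classical_set_scope.
Local Open Scope ring_scope.

(* Suppose 0 is interior to A_i but not to A_j, and let h be an isometry with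
   h(A_i) = A_j.  Isometries preserve interior points, so h(0) <> 0, and A_i lies
   in the unit balls around 0 and around p = h^-1(0) <> 0; transporting by the
   congruences, every A_k lies in a closed unit ball around some q_k <> 0.
   On the finite-dimensional span W of m independent vectors and of the q_k
   (dim W >= m) there is a nonzero functional psi with psi(q_k) <= 0 for all k;
   by compactness psi attains its norm at a unit vector y of W.  Then
   ||y - s q_k|| >= psi(y - s q_k) / ||psi|| >= 1 for s >= 0, strict convexity
   gives ||y - q_k|| > 1, and t y for t slightly below 1 lies in B(0,1) but in
   no A_k. *)

Lemma exists_submx_mul_trmx_0N1 (F : fieldType) n m (D : 'M[F]_n) (B : 'M[F]_(m, n)) :
  (0 < m)%N -> (m <= \rank D)%N ->
  exists z : 'rV[F]_n, [/\ (z <= D)%MS, z != 0 &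
    forall k, (z *m B^T) 0 k = 0 \/ (z *m B^T) 0 k = -1].
Proof.
move=> m_gt0 mD; have rankDB := mxrank_mul_ker D B^T.
have [DK0|/rowV0Pn[z]] := eqVneq (D :&: kermx B^T)%MS 0; last first.
  rewrite sub_capmx => /andP[zD /sub_kermxP zB] z_neq0.
  by exists z; split=> // k; left; rewrite zB mxE.
rewrite DK0 mxrank0 addn0 in rankDB.
have DB_full : row_full (D *m B^T).
  by rewrite /row_full eqn_leq rank_leq_col rankDB.
have /submxP[w Dw] := submx_full (const_mx (-1) : 'rV[F]_m) DB_full.
have zB : (w *m D) *m B^T = const_mx (-1) by rewrite -mulmxA -Dw.
exists (w *m D); split; first exact: submxMl.
- apply/eqP => wD0; move: zB; rewrite wD0 mul0mx => /rowP/(_ (Ordinal m_gt0)).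
  by rewrite !mxE => /eqP; rewrite eq_sym oppr_eq0 oner_eq0.
- by move=> k; right; rewrite zB mxE.
Qed.

Section LinearCombination.
Variables (R : pzRingType) (V : lmodType R).

Definition lincomb n (u : 'I_n -> V) (c : 'rV[R]_n) : V := \sum_(j < n) c 0 j *: u j.

Lemma lincomb0 n (u : 'I_n -> V) : lincomb u 0 = 0.
Proof. by rewrite /lincomb big1 // => j _; rewrite mxE scale0r. Qed.

Lemma lincombZ n (u : 'I_n -> V) a c : lincomb u (a *: c) = a *: lincomb u c.
Proof. by rewrite /lincomb scaler_sumr; apply: eq_bigr => j _; rewrite mxE scalerA. Qed.

Lemma lincombB n (u : 'I_n -> V) c b : lincomb u (c - b) = lincomb u c - lincomb u b.
Proof. by rewrite /lincomb -sumrB; apply: eq_bigr => j _; rewrite !mxE scalerBl. Qed.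

End LinearCombination.

Lemma lincomb_continuous (R : realType) (V : normedModType R) n (u : 'I_n -> V) :
  continuous (lincomb u).
Proof.
apply: continuous_big => [|j _]; first exact: add_continuous.
by move=> c; apply: continuousZr_tmp; exact: coord_continuous.
Qed.

Section Coordinates.
Variables (R : fieldType) (V : lmodType R) (n : nat) (u : 'I_n -> V).
Implicit Types (S : {set 'I_n}) (b c : 'rV[R]_n).

Definition supported S c := forall j, j \notin S -> c 0 j = 0.

Definition free_on S := forall c, supported S c -> lincomb u c = 0 -> c = 0.

Lemma supportedZ S a c : supported S c -> supported S (a *: c).
Proof. by move=> Sc j jS; rewrite mxE Sc // mulr0. Qed.

Lemma supportedB S b c : supported S b -> supported S c -> supported S (b - c).
Proof. by move=> Sb Sc j jS; rewrite !mxE Sb // Sc // subr0. Qed.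

Lemma supported_delta S j : j \in S -> supported S (delta_mx 0 j).
Proof. by move=> jS i iNS; rewrite mxE eqxx; case: eqP => // ij; rewrite ij jS in iNS. Qed.

Lemma lincomb_delta j : lincomb u (delta_mx 0 j) = u j.
Proof.
rewrite /lincomb (bigD1 j) //= mxE !eqxx scale1r big1 ?addr0 // => i /negbTE ij.
by rewrite mxE ij scale0r.
Qed.

Lemma lincomb_neq0 S c : free_on S -> supported S c -> c != 0 -> lincomb u c != 0.
Proof. by move=> freeS Sc; apply: contra_neq; exact: freeS. Qed.

Lemma maximal_free_on_spans S : free_on S ->
    (forall j, j \notin S -> ~ free_on (j |: S)) ->
  forall j, exists2 b, supported S b & lincomb u b = u j.
Proof.
move=> freeS maxS j; have [jS|jNS] := boolP (j \in S).
  by exists (delta_mx 0 j); [exact: supported_delta | exact: lincomb_delta].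
have /existsNP[c /not_implyP[Sc /not_implyP[uc0 c_neq0]]] := maxS j jNS.
have cj_neq0 : c 0 j != 0.
  apply/eqP => cj0; apply: c_neq0; apply: freeS => // i iNS.
  have [->//|ij] := eqVneq i j.
  by apply: Sc; rewrite in_setU1 negb_or ij.
exists (\row_i (if i == j then 0 else - c 0 i / c 0 j)).
  move=> i iNS; rewrite mxE; case: eqP => // /eqP ij.
  by rewrite Sc ?oppr0 ?mul0r // in_setU1 negb_or ij.
move: uc0; rewrite /lincomb (bigD1 j) //= => /eqP; rewrite addrC addr_eq0 => /eqP uj.
rewrite (bigD1 j) //= mxE eqxx scale0r add0r.
rewrite (eq_bigr (fun i => - (c 0 j)^-1 *: (c 0 i *: u i))); last first.
  by move=> i /negbTE ij; rewrite mxE ij scalerA mulNr mulNr mulrC.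
by rewrite -scaler_sumr uj scalerN scaleNr opprK scalerA mulVf // scale1r.
Qed.

Lemma free_on_extends_to_spanning S0 : free_on S0 ->
  exists S, [/\ S0 \subset S, free_on S &
    forall j, exists2 b, supported S b & lincomb u b = u j].
Proof.
move=> freeS0; pose P S := (S0 \subset S) && `[< free_on S >].
have PS0 : P S0 by rewrite /P subxx; apply/asboolP.
have [S /andP[S0S /asboolP freeS] maxS] := arg_maxnP (fun S => #|S|) PS0.
exists S; split=> //; apply: maximal_free_on_spans => // j jNS freeSj.
have /maxS : P (j |: S).
  by rewrite /P (fintype.subset_trans S0S (subsetU1 _ _)); apply/asboolP.
by rewrite cardsU1 jNS /= add1n ltnn.
Qed.

End Coordinates.

Section NormAttaining.
Variables (R : realType) (V : normedModType R) (n : nat) (u : 'I_n -> V).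
Implicit Types (S : {set 'I_n}) (c z : 'rV[R]_n).

Definition dotr z c : R := lincomb (fun j => z 0 j : R^o) c.

Lemma dotrZ z a c : dotr z (a *: c) = a * dotr z c.
Proof. exact: lincombZ. Qed.

Lemma dotrB z b c : dotr z (b - c) = dotr z b - dotr z c.
Proof. exact: lincombB. Qed.

Lemma dotr_self_gt0 z : z != 0 -> 0 < dotr z z.
Proof.
move=> z_neq0; have zz_ge0 j : true -> 0 <= z 0 j * z 0 j by rewrite -expr2 sqr_ge0.
rewrite lt_def sumr_ge0 // andbT; apply: contra z_neq0 => /eqP/(psumr_eq0P zz_ge0) zz0.
by apply/eqP/rowP => j; apply/eqP; rewrite mxE -[_ == 0]orbb -mulf_eq0 zz0.
Qed.

Lemma compact_supported_sphere S :
  compact [set c : 'rV[R]_n | supported S c /\ `|c| = 1].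
Proof.
apply: bounded_closed_compact.
  exists 1; split; first exact: num_real.
  by move=> M M_gt1 c [_ c1]; rewrite /= c1 ltW.
have -> : [set c : 'rV[R]_n | supported S c /\ `|c| = 1] =
    \bigcap_(j in [set j | j \notin S]) [set c : 'rV[R]_n | c 0 j = 0]
    `&` [set c : 'rV[R]_n | `|c| = 1].
  by apply/seteqP; split=> c [Sc c1].
apply: closedI.
  apply: closed_bigI => j _.
  apply: (@preimage_closed _ _ (fun c : 'rV[R]_n => c 0 j) [set x | x = 0]).
    by move=> c _; exact: coord_continuous.
  exact: closed_eq.
apply: (@preimage_closed _ _ (fun c : 'rV[R]_n => `|c|) [set x | x = 1]).
  by move=> c _; exact: norm_continuous.
exact: closed_eq.
Qed.

Lemma dotr_le_attained S z j0 : free_on u S -> j0 \in S ->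
  exists2 c0, supported S c0 /\ `|lincomb u c0| = 1 &
    forall c, supported S c -> dotr z c <= dotr z c0 * `|lincomb u c|.
Proof.
move=> freeS j0S.
pose Sig := [set c : 'rV[R]_n | supported S c /\ `|c| = 1].
have SigZ c : supported S c -> c != 0 -> Sig (`|c|^-1 *: c).
  by move=> Sc c_neq0; split; [exact: supportedZ | exact: normfZV].
pose f c := dotr z c / `|lincomb u c|.
have fZ c a : 0 < a -> f (a *: c) = f c.
  move=> a_gt0; rewrite /f dotrZ lincombZ normrZ gtr0_norm // invfM mulrACA.
  by rewrite mulfV ?gt_eqF // mul1r.
have f_cont : {within Sig, continuous f}.
  apply: continuous_in_subspaceT => c /set_mem[Sc c1].
  have c_neq0 : c != 0 by apply: contra_eq_neq c1 => ->; rewrite normr0 eq_sym oner_neq0.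
  apply: continuousM; first exact: lincomb_continuous.
  apply: continuousV; first by rewrite normr_eq0 (lincomb_neq0 freeS).
  apply: (@continuous_comp _ _ _ (lincomb u) Num.norm); last exact: norm_continuous.
  exact: lincomb_continuous.
have [|c1 /set_mem[Sc1 c1_1] c1_max] := EVT_max_rV _ (@compact_supported_sphere S) f_cont.
  pose e : 'rV[R]_n := delta_mx 0 j0.
  exists (`|e|^-1 *: e); apply: SigZ; first exact: supported_delta.
  by apply/eqP => /matrixP/(_ 0 j0); rewrite !mxE !eqxx => /eqP; rewrite oner_eq0.
have Lc1_gt0 : 0 < `|lincomb u c1|.
  rewrite normr_gt0 (lincomb_neq0 freeS) //.
  by apply: contra_eq_neq c1_1 => ->; rewrite normr0 eq_sym oner_neq0.
exists (`|lincomb u c1|^-1 *: c1).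
  by split; [exact: supportedZ | rewrite lincombZ normfZV // -normr_gt0].
move=> c Sc; have [->|c_neq0] := eqVneq c 0.
  by rewrite /dotr !lincomb0 normr0 mulr0.
have Lc_gt0 : 0 < `|lincomb u c| by rewrite normr_gt0 (lincomb_neq0 freeS).
have := c1_max _ (mem_set (SigZ c Sc c_neq0)).
by rewrite fZ ?invr_gt0 ?normr_gt0 // /f ler_pdivrMr // dotrZ [_^-1 * _]mulrC.
Qed.

End NormAttaining.

Lemma rank_diag_indicator_ge (F : fieldType) m k (S : {set 'I_(m + k)}) :
    [set j : 'I_(m + k) | (j < m)%N]%SET \subset S ->
  (m <= \rank (diag_mx (\row_j (j \in S)%:R) : 'M[F]_(m + k)))%N.
Proof.
move=> S0S; rewrite -[X in (X <= _)%N](@rank_pid_mx F m (m + k) m) ?leq_addr //.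
apply/mxrankS/submxP; exists (pid_mx m); rewrite mul_mx_diag.
apply/matrixP => i j; rewrite !mxE; have [jS|jNS] := boolP (j \in S).
  by rewrite mulr1.
rewrite mulr0; case: eqP => //= ij; rewrite ltn_ord.
suff : j \in S by rewrite (negbTE jNS).
by apply: (fintype.subsetP S0S); rewrite inE -ij ltn_ord.
Qed.

Section FarFromRays.
Variables (R : realType) (V : normedModType R).

Definition fam_cat m k (v : 'I_m -> V) (q : 'I_k -> V) (j : 'I_(m + k)) : V :=
  match fintype.split j with inl i => v i | inr l => q l end.

Lemma fam_cat_rshift m k (v : 'I_m -> V) (q : 'I_k -> V) l : fam_cat v q (rshift m l) = q l.
Proof. by rewrite /fam_cat (unsplitK (inr _ l)). Qed.

Lemma free_on_fam_cat m k (v : 'I_m -> V) (q : 'I_k -> V) :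
  lin_indep v -> free_on (fam_cat v q) [set j : 'I_(m + k) | (j < m)%N]%SET.
Proof.
move=> indep_v c Sc uc0.
have cr l : c 0 (rshift m l) = 0 by apply: Sc; rewrite inE -leqNgt leq_addr.
move: uc0; rewrite /lincomb big_split_ord /= [X in _ + X]big1 ?addr0; last first.
  by move=> l _; rewrite cr scale0r.
under eq_bigr do rewrite /fam_cat (unsplitK (inl _ _)).
move/(indep_v (fun i => c 0 (lshift k i))) => cl.
apply/rowP => j; rewrite mxE -(splitK j).
by case: (fintype.split j) => [i|l] /=; [exact: cl | exact: cr].
Qed.

Lemma exists_unit_far_from_rays m (v q : 'I_m -> V) : (0 < m)%N -> lin_indep v ->
  exists y : V, `|y| = 1 /\ forall k s, 0 <= s -> 1 <= `|y - s *: q k|.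
Proof.
move=> m_gt0 indep_v; pose u := fam_cat v q.
have [S [S0S freeS spanS]] :=
  free_on_extends_to_spanning (free_on_fam_cat (q := q) indep_v).
have /choice[b /all_and2[Sb ub]] : forall k, exists b, supported S b /\ lincomb u b = q k.
  by move=> k; have [b Sb ub] := spanS (rshift m k); exists b; rewrite ub fam_cat_rshift.
pose B := \matrix_(k < m, j < m + m) b k 0 j.
have [z [zD z_neq0 zB]] := exists_submx_mul_trmx_0N1 B m_gt0 (rank_diag_indicator_ge _ S0S).
have Sz : supported S z.
  by case/submxP: zD => w -> j jNS; rewrite mul_mx_diag !mxE (negbTE jNS) mulr0.
have dotr_b_le0 k : dotr z (b k) <= 0.
  have <- : (z *m B^T) 0 k = dotr z (b k).
    by rewrite !mxE; apply: eq_bigr => j _; rewrite !mxE mulrC.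
  by case: (zB k) => ->; rewrite ?lerN10.
(* [dotr z] is a nonzero functional on the span, nonpositive at every [q k]. *)
have j0S : lshift m (Ordinal m_gt0) \in S by apply: (fintype.subsetP S0S); rewrite inE.
have [c0 [Sc0 c0_1] c0_max] := dotr_le_attained z freeS j0S.
have M_gt0 : 0 < dotr z c0.
  have := lt_le_trans (dotr_self_gt0 z_neq0) (c0_max z Sz).
  by apply: contraTT; rewrite -!leNgt => M_le0; exact: mulr_le0_ge0.
exists (lincomb u c0); split=> // k s s_ge0.
have := c0_max _ (supportedB Sc0 (supportedZ s (Sb k))).
rewrite dotrB dotrZ lincombB lincombZ ub => h.
rewrite -(ler_pM2l M_gt0) mulr1; apply: le_trans h.
by rewrite lerBrDr gerDl mulr_ge0_le0.
Qed.

End FarFromRays.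

Section Geometry.
Variables (R : realType) (X : normedModType R).

Lemma strictly_convex_ray_gt1 : @strictly_convex R X ->
  forall y q : X, q != 0 -> `|y| = 1 ->
  (forall s, 0 <= s -> 1 <= `|y - s *: q|) -> 1 < `|y - q|.
Proof.
move=> hsc y q q_neq0 y1 ray1; rewrite ltNge; apply/negP => yq_le1.
have yq1 : `|y - q| = 1.
  by apply/le_anti; rewrite yq_le1 /=; have := ray1 1 ler01; rewrite scale1r.
have y_neq : y != y - q by rewrite -subr_eq0 opprB addrC subrK.
have half01 : 0 < (2^-1 : R) < 1 by apply/andP; split; lra.
have := hsc _ _ y_neq y1 yq1 _ half01.
have -> : 2^-1 *: y + (1 - 2^-1) *: (y - q) = y - 2^-1 *: q.
  have [-> half2] : 1 - 2^-1 = 2^-1 :> R /\ 2^-1 + 2^-1 = 1 :> R by split; lra.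
  by rewrite scalerBr addrA -scalerDl half2 scale1r.
by have := ray1 2^-1 (ltW (andP half01).1); move=> /le_lt_trans h /h; rewrite ltxx.
Qed.

Lemma isometry_onto_inj (f : X -> X) : isometry_onto f -> injective f.
Proof.
by case=> _ iso x y fxy; apply/eqP; rewrite -subr_eq0 -normr_eq0 -iso fxy subrr normr0.
Qed.

Lemma isometry_onto_oball (f : X -> X) x r :
  isometry_onto f -> f @` oball x r = oball (f x) r.
Proof.
case=> onto iso; apply/seteqP; split=> [_ [z xz <-]|z fxz]; first by rewrite /oball /= iso.
have [w fwz] := onto z; exists w => //.
by rewrite /oball /= -iso fwz.
Qed.

Lemma isometry_onto_Int (f : X -> X) A x : isometry_onto f -> Int A x -> Int (f @` A) (f x).
Proof.
move=> isof [Ax [e [e_gt0 xeA]]]; split; first by exists x.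
by exists e; split=> //; rewrite -isometry_onto_oball //; exact: image_subset.
Qed.

Lemma congruent_sub_cball_center_neq0 (A B : set X) a b r :
    congruent A B -> a != b -> A `<=` cball a r -> A `<=` cball b r ->
  exists2 q, q != 0 & B `<=` cball q r.
Proof.
case=> g [isog <-] ab Aa Ab.
have image_cball c : A `<=` cball c r -> g @` A `<=` cball (g c) r.
  by move=> Ac _ [x Ax <-]; rewrite /cball /= isog.2; exact: Ac.
have [ga0|ga_neq0] := eqVneq (g a) 0; last by exists (g a); last exact: image_cball.
exists (g b); last exact: image_cball.
by rewrite -ga0 (inj_eq (isometry_onto_inj isog)) eq_sym.
Qed.

Lemma exists_oball_point_off_cballs m (q : 'I_m -> X) y :
    `|y| = 1 -> (forall k, 1 < `|y - q k|) ->
  exists2 w, oball 0 1 w & forall k, ~ cball (q k) 1 w.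
Proof.
move=> y1 yq.
have near_each k : \forall t \near (1 : R), 1 < `|t *: y - q k|.
  have cont : {for 1, continuous (fun t : R => `|t *: y - q k|)}.
    apply: (@continuous_comp _ _ _ (fun t : R => t *: y - q k) Num.norm).
      by apply: cvgB; [exact: scalel_continuous | exact: cvg_cst].
    exact: norm_continuous.
  by apply: (cvgr_gt _ cont); rewrite scale1r.
have [d d_gt0 near1] := iffLR (nbhs_ballP _ _)
  (@filter_forall _ _ (fun k (t : R) => 1 < `|t *: y - q k|) _ _ near_each).
pose t := 1 - Order.min d 1 / 2.
have d1_le_d : Order.min d 1 <= d by rewrite ge_min lexx.
have d1_le1 : Order.min d 1 <= 1 by rewrite ge_min lexx orbT.
have d1_gt0 : 0 < Order.min d 1 by rewrite lt_min d_gt0 ltr01.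
exists (t *: y); first by rewrite /oball /= subr0 normrZ y1 mulr1 gtr0_norm /t; lra.
move=> k; apply/negP; rewrite -ltNge; apply: near1.
by rewrite /ball /= opprB addrC subrK gtr0_norm /t; lra.
Qed.

End Geometry.

Theorem proposition1 (R : realType) (X : normedModType R)
  (hdim : @dim_ge R X 2) (hsc : @strictly_convex R X)
  (m : nat) (hm : @dim_ge R X m)
  (E : set X) (A : 'I_m -> set X)
  (hBE : oball 0 1 `<=` E) (hEB : E `<=` cball 0 1)
  (hEA : E = \bigcup_(i in [set: 'I_m]) A i)
  (hcong : forall i j : 'I_m, congruent (A i) (A j)) :
  (forall i : 'I_m, Int (A i) 0) \/ (forall i : 'I_m, ~ Int (A i) 0).
Proof.
have [[i Ai0]|noInt] := pselect (exists i, Int (A i) 0); last first.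
  by right=> i Ai0; apply: noInt; exists i.
left=> j; have [//|Aj0] := pselect (Int (A j) 0); exfalso.
have m_gt0 : (0 < m)%N := leq_ltn_trans (leq0n i) (ltn_ord i).
have A_unit k : A k `<=` cball 0 1 by move=> x Akx; apply: hEB; rewrite hEA; exists k.
have [h [isoh hAij]] := hcong i j.
have h0_neq0 : h 0 != 0.
  by apply/eqP => h0; apply: Aj0; rewrite -hAij -h0; exact: isometry_onto_Int.
have [p hp0] := isoh.1 0.
have p_neq0 : 0 != p by apply/eqP => p0; move/eqP: h0_neq0; apply; rewrite {1}p0.
have Ai_p : A i `<=` cball p 1.
  move=> x Aix; rewrite /cball /= -isoh.2 hp0.
  by apply: (A_unit j); rewrite -hAij; exists x.
have /choice[q qP] : forall k, exists q, q != 0 /\ A k `<=` cball q 1.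
  move=> k; have [q] := congruent_sub_cball_center_neq0 (hcong i k) p_neq0 (A_unit i) Ai_p.
  by exists q.
have [v indep_v] := hm.
have [y [y1 far]] := exists_unit_far_from_rays q m_gt0 indep_v.
have yq k : 1 < `|y - q k| := strictly_convex_ray_gt1 hsc (qP k).1 y1 (far k).
have [w /hBE] := exists_oball_point_off_cballs y1 yq.
by rewrite hEA => -[k _ Akw] /(_ k); apply; exact: (qP k).2.
Qed.
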